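(* Let $\mathcal X=(x_n)_{n\in\mathbb N}$ be a fundamental minimal system for $\mathbb X$ with dual system $\mathcal X^*=(x_n^* )$, and let $K\ge1$. Suppose that $\sup_n\|x_n^*\|<\infty$ and that for each $f\in\langle\mathcal X\rangle$ there are $n(f)\in\mathbb N$ and $\delta(f)>0$ such that $\|f\|\le K\|f+g\|$ for every $g\in\langle\mathcal X_{>n(f)}\rangle$ with $\|g\|_\infty<\delta(f)$. Then for each $f\in\langle\mathcal X\rangle$ there is $m(f)\in\mathbb N$ such that $\|f\|\le K\|f+g\|$ for every $g\in\langle\mathcal X_{>m(f)}\rangle$. Consequently, $\langle\mathcal X^*\rangle$ is a $K^{-1}$-norming subspace of $\mathbb X^*$.
   Context: Throughout, $\mathbb X$ is an infinite-dimensional separable Banach space over $\mathbb F\in\{\mathbb R,\mathbb C\}$. A (fundamental minimal) system for $\mathbb X$ is a sequence $\mathcal X=(x_n)_{n\in\mathbb N}\subset\mathbb X$ whose linear span $\langle\mathcal X\rangle$ is dense in $\mathbb X$ and for which there is a sequence $\mathcal X^*=(x_n^* )_{n\in\mathbb N}\subset\mathbb X^*$ with $x_n^*(x_k)=\delta_{nk}$ for all $n,k$; $\mathcal X^*$ is called the dual system. For $f\in\mathbb X$, $\|f\|_\infty:=\sup_n|x_n^*(f)|$. For $m\in\mathbb N$, $\mathcal X_{>m}=(x_n)_{n>m}$ and $\langle\mathcal X_{>m}\rangle$ is its linear span. A subspace $\mathbb Z\subset\mathbb X^*$ is $c$-norming ($0<c\le 1$) if $c\|f\|\le\sup\{|f^*(f)|: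 f^*\in\mathbb Z,\ \|f^*\|=1\}$ for all $f\in\mathbb X$. *)

From HB Require Import structures.
From mathcomp Require Import all_boot all_order all_algebra.
From mathcomp Require Import all_classical all_reals all_analysis.
From mathcomp Require Import complex.

Set Implicit Arguments.
Unset Strict Implicit.
Unset Printing Implicit Defensive.

Import Order.TTheory GRing.Theory Num.Theory.
Import numFieldNormedType.Exports.
Local Open Scope classical_set_scope.
Local Open Scope ring_scope.

Section Defs.
Variables (F : numFieldType) (V : normedModType F).

Definition dual_elem (phi : V -> F) : Prop :=
  (forall (a : F) (x y : V), phi (a *: x + y) = a * phi x + phi y) /\
  continuous phi.

Definition dual_norm_le (phi : V -> F) (C : F) : Prop :=
  forall v : V, `|phi v| <= C * `|v|.

Definition dual_norm_eq1 (phi : V -> F) : Prop :=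
  dual_norm_le phi 1 /\
  (forall e : F, 0 < e -> exists v : V, `|v| <= 1 /\ 1 - e < `|phi v|).

Definition lin_span (x : nat -> V) : set V :=
  [set v | exists (s : seq nat) (c : nat -> F), v = \sum_(i <- s) c i *: x i].

Definition tail_span (x : nat -> V) (m : nat) : set V :=
  [set v | exists (s : seq nat) (c : nat -> F),
      (forall i, i \in s -> (m < i)%N) /\ v = \sum_(i <- s) c i *: x i].

Definition dual_span (xs : nat -> V -> F) : set (V -> F) :=
  [set phi | exists (s : seq nat) (c : nat -> F),
      phi = fun v => \sum_(i <- s) c i * xs i v].

Definition fundamental_minimal_system (x : nat -> V) (xs : nat -> V -> F) : Prop :=
  closure (lin_span x) = setT /\
  (forall n, dual_elem (xs n)) /\
  (forall n k, xs n (x k) = (n == k)%:R).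

(* ||f||_oo < d, where ||f||_oo = sup_n |x_n^*(f)| (sup < d written out). *)
Definition sup_coord_lt (xs : nat -> V -> F) (f : V) (d : F) : Prop :=
  exists2 c : F, c < d & forall n, `|xs n f| <= c.

(* Z is a c-norming subset of V^*:
   c ||f|| <= sup { |phi f| : phi in Z, ||phi|| = 1 } for all f (sup written out). *)
Definition norming (c : F) (Z : set (V -> F)) : Prop :=
  forall f : V, forall e : F, 0 < e ->
    exists phi, Z phi /\ dual_norm_eq1 phi /\ c * `|f| - e < `|phi f|.

End Defs.

Definition Cor33 (F : numFieldType) : Prop :=
  forall (V : completeNormedModType F) (x : nat -> V) (xs : nat -> V -> F) (K : F),
    fundamental_minimal_system x xs ->
    1 <= K ->
    (exists C : F, forall n, dual_norm_le (xs n) C) ->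
    (forall f, lin_span x f ->
       exists (n : nat) (d : F), 0 < d /\
         forall g, tail_span x n g -> sup_coord_lt xs g d ->
           `|f| <= K * `|f + g|) ->
    (forall f, lin_span x f ->
       exists m : nat, forall g, tail_span x m g -> `|f| <= K * `|f + g|) /\
    norming K^-1 (dual_span xs).

From HB Require Import structures.
From mathcomp Require Import all_boot all_order all_algebra.
From mathcomp Require Import all_classical all_reals all_analysis.
From mathcomp Require Import complex.
From mathcomp Require Import ring lra zify.

Set Implicit Arguments.
Unset Strict Implicit.
Unset Printing Implicit Defensive.

Import Order.TTheory GRing.Theory Num.Theory.
Import numFieldNormedType.Exports.
Local Open Scope classical_set_scope.
Local Open Scope ring_scope.

(* Tail estimates: if some f in the span had none, then beyond every index there would be
   a bad perturbation g, with K ||f + g|| < ||f||, whose coordinates are bounded by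
   2 C ||f|| (C = sup ||x_n^*||). Adding k such perturbations with disjoint supports and
   dividing by k gives a bad perturbation beyond n(f) with coordinates below delta(f).

   Norming: let u be supported in the first N coordinates with a tail estimate beyond m.
   Every v in the span sharing the first L = m + N + 1 coordinates of u has
   ||u|| <= K ||v||, so the quotient seminorm of the coordinate map onto F^L (R^(2L) in
   the complex case) is at least ||u|| / K at the coordinates of u. A supporting functional
   of that seminorm, from the finite-dimensional Hahn-Banach theorem, is a combination of
   x_0^*, ..., x_(L-1)^* of norm one on the dense span, hence on the whole space. *)

Section ColumnForms.
Variables (R : comNzRingType) (n : nat).

Definition colform (c : 'cV[R]_n) (a : 'rV[R]_n) : R := (a *m c) 0 0.

Lemma colformD c a b : colform c (a + b) = colform c a + colform c b.
Proof. by rewrite /colform mulmxDl mxE. Qed.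

Lemma colformZ c t a : colform c (t *: a) = t * colform c a.
Proof. by rewrite /colform -scalemxAl mxE. Qed.

Lemma colformDl c d a : colform (c + d) a = colform c a + colform d a.
Proof. by rewrite /colform mulmxDr mxE. Qed.

Lemma colformZl c t a : colform (t *: c) a = t * colform c a.
Proof. by rewrite /colform -scalemxAr mxE. Qed.

Lemma colform0l a : colform 0 a = 0.
Proof. by rewrite /colform mulmx0 mxE. Qed.

End ColumnForms.

Lemma colform_separating (F : fieldType) n (W : 'M[F]_n) (e : 'rV[F]_n) :
  ~~ (e <= W)%MS ->
  exists mu, (forall w, (w <= W)%MS -> colform mu w = 0) /\ colform mu e = 1.
Proof.
move=> eW; set k := e *m cokermx W.
have [j kj] : exists j, k 0 j != 0.
  apply/existsP; apply: contraNT eW => /existsPn k0; rewrite submxE -/k.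
  by apply/eqP/rowP => i; move: (k0 i); rewrite negbK => /eqP ->; rewrite mxE.
exists (cokermx W *m ((k 0 j)^-1 *: delta_mx j 0)); split.
  by move=> w; rewrite submxE => /eqP w0; rewrite /colform mulmxA w0 mul0mx mxE.
have kj' : col j k 0 0 = k 0 j by rewrite mxE.
by rewrite /colform mulmxA -/k -scalemxAr -colE [LHS]mxE kj' mulVf.
Qed.

Section FiniteHahnBanach.
Variables (R : realType) (n : nat) (p : 'rV[R]_n -> R).
Hypothesis pD : forall a b, p (a + b) <= p a + p b.
Hypothesis pZ : forall t a, 0 <= t -> p (t *: a) = t * p a.

Lemma sublinear0 : p 0 = 0.
Proof. by rewrite -(scale0r (0 : 'rV[R]_n)) pZ // mul0r. Qed.

Definition dominated_on (W : 'M[R]_n) c := forall w, (w <= W)%MS -> colform c w <= p w.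

(* The one-dimensional step of Hahn-Banach: any value [g] between
   [sup (c w - p (w - e))] and [inf (p (w + e) - c w)] keeps [c + s g] below [p]. *)
Lemma dominated_line_step W c e g : dominated_on W c ->
  (forall w, (w <= W)%MS -> colform c w - p (w - e) <= g) ->
  (forall w, (w <= W)%MS -> g <= p (w + e) - colform c w) ->
  forall w s, (w <= W)%MS -> colform c w + s * g <= p (w + s *: e).
Proof.
move=> cW glo ghi w s wW.
have [s0|s0|->] := ltrgtP s 0; last by rewrite mul0r addr0 scale0r addr0; exact: cW.
- have [r r0 ->] : exists2 r, 0 < r & s = - r by exists (- s); rewrite ?oppr_gt0 ?opprK.
  have -> : w + - r *: e = r *: (r^-1 *: w - e).
    by rewrite scalerBr scalerA mulfV ?gt_eqF // scale1r scaleNr.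
  have := glo _ (scalemx_sub r^-1 wW); rewrite colformZ pZ ?(ltW r0) // => h.
  have := ler_wpM2l (ltW r0) h; rewrite mulrBr mulrA mulfV ?gt_eqF // mul1r.
  move=> h'; lra.
- have := ghi _ (scalemx_sub s^-1 wW); rewrite colformZ => h.
  have := ler_wpM2l (ltW s0) h; rewrite mulrBr mulrA mulfV ?gt_eqF // mul1r.
  have -> : w + s *: e = s *: (s^-1 *: w + e).
    by rewrite scalerDr scalerA mulfV ?gt_eqF // scale1r.
  move=> h'; rewrite pZ ?(ltW s0) //; lra.
Qed.

Lemma dominated_extend W c e : dominated_on W c -> ~~ (e <= W)%MS ->
  exists c', [/\ dominated_on (W + e)%MS c',
    (forall w, (w <= W)%MS -> colform c' w = colform c w) &
    (forall y, (forall w, (w <= W)%MS -> y <= p (w + e) - colform c w) ->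
       y <= colform c' e)].
Proof.
move=> cW eW; have [mu [muW mue]] := colform_separating eW.
set B := [set y | exists2 w, (w <= W)%MS & y = p (w + e) - colform c w].
have B0 : B !=set0 by exists (p (0 + e) - colform c 0); exists 0 => //; exact: sub0mx.
have Blb w1 : (w1 <= W)%MS -> lbound B (colform c w1 - p (w1 - e)).
  move=> w1W _ [w wW ->]; rewrite lerBrDr addrAC lerBlDr -colformD.
  rewrite (le_trans (cW _ _)) ?addmx_sub // (le_trans _ (pD _ _)) //.
  by rewrite addrCA addrK.
have Bb : has_lbound B by exists (colform c 0 - p (0 - e)); apply: Blb; exact: sub0mx.
set g := inf B.
exists (c + (g - colform c e) *: mu); split.
- move=> v /sub_addsmxP [[u1 u2] /= ->]; rewrite [u2]mx11_scalar mul_scalar_mx.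
  rewrite colformDl colformZl !colformD !colformZ muW ?submxMl // mue.
  rewrite add0r mulr1 [X in X <= _](_ : _ = colform c (u1 *m W) + u2 0 0 * g); last by ring.
  apply: (dominated_line_step cW) => [w wW|w wW|]; last exact: submxMl.
    exact: lb_le_inf B0 (Blb _ wW).
  by apply: (ge_inf Bb); exists w.
- by move=> w wW; rewrite colformDl colformZl muW // mulr0 addr0.
- move=> y ylb; rewrite colformDl colformZl mue mulr1 addrC subrK.
  by apply: lb_le_inf B0 _ => _ [w wW ->]; exact: ylb.
Qed.

Lemma dominated_exhaust (a0 : 'rV[R]_n) (es : seq 'rV[R]_n) :
  exists W c, [/\ dominated_on W c, colform c a0 = p a0, (a0 <= W)%MS &
                  forall e, e \in es -> (e <= W)%MS].
Proof.
have dom0 : dominated_on 0 0.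
  by move=> w; rewrite submx0 => /eqP ->; rewrite colform0l sublinear0.
elim: es => [|e es [W [c [cW ca0 a0W esW]]]].
  have [->|a0n] := eqVneq a0 0.
    by exists 0, 0; split => //; [rewrite colform0l sublinear0 | exact: sub0mx].
  have [|c' [c'W _ c'lb]] := dominated_extend dom0 (e := a0); first by rewrite submx0.
  exists ((0 : 'M[R]_n) + a0)%MS, c'; split => //; last exact: addsmxSr.
  apply/eqP; rewrite eq_le c'W ?addsmxSr // c'lb // => w.
  by rewrite submx0 => /eqP ->; rewrite add0r colform0l subr0.
have [eW|eW] := boolP (e <= W)%MS.
  by exists W, c; split => // e'; rewrite inE => /orP [/eqP -> //|]; exact: esW.
have [c' [c'W c'c _]] := dominated_extend cW eW.
exists (W + e)%MS, c'; split => //; first by rewrite c'c.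
  exact: submx_trans a0W (addsmxSl _ _).
move=> e'; rewrite inE => /orP [/eqP ->|/esW e'W]; first exact: addsmxSr.
exact: submx_trans e'W (addsmxSl _ _).
Qed.

Lemma hahn_banach_row (a0 : 'rV[R]_n) :
  exists c, (forall a, colform c a <= p a) /\ colform c a0 = p a0.
Proof.
have [W [c [cW ca0 _ esW]]] :=
  dominated_exhaust a0 [seq row i (1%:M : 'M[R]_n) | i <- enum 'I_n].
exists c; split => // a; apply: cW.
apply: submx_trans (submx1 a) _; apply/row_subP => i; apply: esW.
by apply: map_f; rewrite mem_enum.
Qed.

End FiniteHahnBanach.

Section QuotientSeminorm.
Variables (R : realType) (V : zmodType) (S : set V) (nrm : V -> R) (sc : R -> V -> V).
Variables (n : nat) (T : V -> 'rV[R]_n).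
Hypotheses (S0 : S 0) (SD : forall v w, S v -> S w -> S (v + w))
  (SZ : forall t v, 0 < t -> S v -> S (sc t v)).
Hypotheses (nrm_ge0 : forall v, 0 <= nrm v) (nrm0 : nrm 0 = 0)
  (nrmD : forall v w, nrm (v + w) <= nrm v + nrm w)
  (nrmZ : forall t v, 0 < t -> nrm (sc t v) = t * nrm v).
Hypotheses (TD : forall v w, T (v + w) = T v + T w) (T0 : T 0 = 0)
  (TZ : forall t v, T (sc t v) = t *: T v) (T_onto : forall a, exists2 v, S v & T v = a).

Definition quot_norm a := inf [set nrm v | v in [set v | S v /\ T v = a]].

Let quot_norm_set0 a : [set nrm v | v in [set v | S v /\ T v = a]] !=set0.
Proof. by have [v Sv Tv] := T_onto a; exists (nrm v), v. Qed.

Let quot_norm_lbound a : has_lbound [set nrm v | v in [set v | S v /\ T v = a]].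
Proof. by exists 0 => _ [v _ <-]. Qed.

Lemma quot_norm_le v : S v -> quot_norm (T v) <= nrm v.
Proof. by move=> Sv; apply: ge_inf; [exact: quot_norm_lbound | exists v]. Qed.

Lemma quot_norm_ge a y : (forall v, S v -> T v = a -> y <= nrm v) -> y <= quot_norm a.
Proof. by move=> ylb; apply: lb_le_inf => // _ [v [Sv Tv] <-]; exact: ylb. Qed.

Lemma quot_norm_approx a e : 0 < e ->
  exists v, [/\ S v, T v = a & nrm v < quot_norm a + e].
Proof.
move=> e0; have [_ [v [Sv Tv] <-] lt] :=
  inf_adherent e0 (conj (quot_norm_set0 a) (quot_norm_lbound a)).
by exists v.
Qed.

Lemma quot_normD a b : quot_norm (a + b) <= quot_norm a + quot_norm b.
Proof.
rewrite -lerBlDl; apply: quot_norm_ge => w Sw Tw; rewrite lerBlDl -lerBlDr.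
apply: quot_norm_ge => v Sv Tv; rewrite lerBlDr.
by apply: le_trans (nrmD _ _); apply: le_trans (quot_norm_le (SD Sv Sw)); rewrite TD Tv Tw.
Qed.

Lemma quot_normZ t a : 0 <= t -> quot_norm (t *: a) = t * quot_norm a.
Proof.
rewrite le_eqVlt => /orP [/eqP <-|t0].
  rewrite scale0r mul0r; apply/eqP; rewrite eq_le -{1}T0.
  by rewrite (le_trans (quot_norm_le S0)) ?nrm0 //=; apply: quot_norm_ge.
apply/eqP; rewrite eq_le; apply/andP; split.
  rewrite mulrC -ler_pdivrMr //; apply: quot_norm_ge => v Sv Tv.
  by rewrite ler_pdivrMr // mulrC -nrmZ // -Tv -TZ; exact: quot_norm_le (SZ t0 Sv).
apply: quot_norm_ge => w Sw Tw; have ti : 0 < t^-1 by rewrite invr_gt0.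
rewrite mulrC -ler_pdivlMr // mulrC -nrmZ //.
have <- : T (sc t^-1 w) = a by rewrite TZ Tw scalerA mulVf ?gt_eqF // scale1r.
exact: quot_norm_le (SZ ti Sw).
Qed.

Lemma quot_norm_support u y : S u -> (forall v, S v -> T v = T u -> y <= nrm v) ->
  exists c, [/\ forall v, S v -> colform c (T v) <= nrm v, y <= colform c (T u) &
    forall e, 0 < e -> exists v, [/\ S v, T v = T u & nrm v < colform c (T u) + e]].
Proof.
move=> Su ylb; have [c [cN cu]] := hahn_banach_row quot_normD quot_normZ (T u).
exists c; rewrite cu; split; last exact: quot_norm_approx.
- by move=> v Sv; apply: le_trans (cN _) (quot_norm_le Sv).
- exact: quot_norm_ge.
Qed.

End QuotientSeminorm.

Section NormedFunctionals.
Variables (F : numFieldType) (V : normedModType F).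

Lemma dual_norm_eq1_of_near_attained (phi : V -> F) u :
  (forall t v, phi (t *: v) = t * phi v) -> (forall v, `|phi v| <= `|v|) -> phi u != 0 ->
  (forall e, 0 < e -> exists v, phi v = phi u /\ `|v| < `|phi u| + e) ->
  dual_norm_eq1 phi.
Proof.
move=> phiZ phi_le u0 near; split => [v|e e0]; first by rewrite mul1r.
set a := `|phi u|; have a0 : 0 < a by rewrite normr_gt0.
have [v [vu va]] := near _ (mulr_gt0 a0 e0).
have av : a <= `|v| by rewrite /a -vu.
have v0 : 0 < `|v| := lt_le_trans a0 av.
exists (`|v|^-1 *: v); split; first by rewrite normrZ normfV normr_id mulVf ?gt_eqF.
rewrite phiZ normrM normfV normr_id vu -/a mulrC ltr_pdivlMr //.
rewrite mulrBl mul1r ltrBlDr; apply: lt_le_trans va _.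
by rewrite lerD2l mulrC ler_pM2l.
Qed.

Lemma norming_approx (phi : V -> F) (K : F) (f w : V) (e : F) :
  (forall v w, phi (v - w) = phi v - phi w) -> dual_norm_le phi 1 -> 1 <= K ->
  K^-1 * `|w| <= `|phi w| -> `|f - w| < e / 2 -> K^-1 * `|f| - e < `|phi f|.
Proof.
move=> phiB phi1 K1 Kw fw.
have Ki0 : 0 <= K^-1 by rewrite invr_ge0 (le_trans ler01 K1).
have Ki1 : K^-1 <= 1 by rewrite invf_le1 // (lt_le_trans ltr01 K1).
have hf : K^-1 * `|f| <= K^-1 * `|w| + K^-1 * `|f - w|.
  rewrite -mulrDr; apply: ler_wpM2l => //; rewrite addrC -{1}(subrK w f); exact: ler_normD.
have hw : `|phi w| <= `|phi f| + `|f - w|.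
  have -> : phi w = phi f - phi (f - w) by rewrite -phiB subKr.
  apply: le_trans (ler_normB _ _) _; rewrite lerD2l.
  by apply: le_trans (phi1 _) _; rewrite mul1r.
have Kfw : K^-1 * `|f - w| <= `|f - w| by rewrite ler_piMl.
rewrite ltrBlDr; apply: le_lt_trans (le_trans hf (lerD Kw Kfw)) _.
apply: le_lt_trans (lerD hw (lexx _)) _.
by rewrite (splitr e) -addrA ltrD2l ltrD.
Qed.

End NormedFunctionals.

Section Coordinates.
Variables (F : numFieldType) (V : normedModType F) (x : nat -> V) (xs : nat -> V -> F).
Hypothesis xs_lin : forall n a u v, xs n (a *: u + v) = a * xs n u + xs n v.
Hypothesis xs_bio : forall n k, xs n (x k) = (n == k)%:R.

Lemma coord0 n : xs n 0 = 0.
Proof.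
have := xs_lin n 1 0 0; rewrite scale1r addr0 mul1r => /esym/eqP.
by rewrite -subr_eq0 addrK => /eqP.
Qed.

Lemma coordD n u v : xs n (u + v) = xs n u + xs n v.
Proof. by have := xs_lin n 1 u v; rewrite scale1r mul1r. Qed.

Lemma coordZ n a u : xs n (a *: u) = a * xs n u.
Proof. by rewrite -[a *: u]addr0 xs_lin coord0 addr0. Qed.

Lemma coordB n u v : xs n (u - v) = xs n u - xs n v.
Proof. by rewrite coordD -scaleN1r coordZ mulN1r. Qed.

Lemma x_neq0 k : x k != 0.
Proof.
apply: contra_neq (@oner_neq0 F) => xk0.
by have := xs_bio k k; rewrite xk0 coord0 eqxx => ->.
Qed.

Lemma dual_bound_ge0 k (C : F) : dual_norm_le (xs k) C -> 0 <= C.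
Proof.
move=> /(_ (x k)); rewrite xs_bio eqxx normr1 => C1.
have xk0 : 0 < `|x k| by rewrite normr_gt0 x_neq0.
by rewrite -(pmulr_lge0 _ xk0) (le_trans ler01 C1).
Qed.

Definition xsum N (a : nat -> F) := \sum_(i < N) a i *: x i.
Definition truncate N (a : nat -> F) i := if (i < N)%N then a i else 0.

Lemma coord_xsum n N a : xs n (xsum N a) = if (n < N)%N then a n else 0.
Proof.
rewrite /xsum (big_morph (xs n) (coordD n) (coord0 n)).
under eq_bigr => i _ do rewrite coordZ xs_bio.
case: ifP => nN.
  rewrite (bigD1 (Ordinal nN)) //= eqxx mulr1 big1 ?addr0 // => i /negPf.
  by rewrite eq_sym -val_eqE /= => ->; rewrite mulr0.
by rewrite big1 // => i _; case: eqP => [ni|]; [move: nN; rewrite ni ltn_ord | rewrite mulr0].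
Qed.

Lemma xsum_widen N N' a : (N <= N')%N -> xsum N a = xsum N' (truncate N a).
Proof.
move=> NN; rewrite /xsum (big_ord_widen _ (fun i => a i *: x i) NN) big_mkcond.
by apply: eq_bigr => i _; rewrite /truncate; case: ifP => // _; rewrite scale0r.
Qed.

Lemma xsumD N a b : xsum N a + xsum N b = xsum N (fun i => a i + b i).
Proof. by rewrite /xsum -big_split; apply: eq_bigr => i _; rewrite scalerDl. Qed.

Lemma xsumZ N t a : t *: xsum N a = xsum N (fun i => t * a i).
Proof. by rewrite /xsum scaler_sumr; apply: eq_bigr => i _; rewrite scalerA. Qed.

Lemma xsumN N a : - xsum N a = xsum N (fun i => - a i).
Proof. by rewrite -scaleN1r xsumZ; congr xsum; apply: funext => i; rewrite mulN1r. Qed.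

Lemma seq_sum_xsum (s : seq nat) (c : nat -> F) N : (forall i, i \in s -> (i < N)%N) ->
  \sum_(i <- s) c i *: x i = xsum N (fun i => c i *+ count_mem i s).
Proof.
elim: s => [|j s IH] sN.
  by rewrite big_nil /xsum big1 // => i _; rewrite mulr0n scale0r.
rewrite big_cons IH; last by move=> i iS; apply: sN; rewrite inE iS orbT.
have jN : (j < N)%N by apply: sN; rewrite inE eqxx.
rewrite /xsum.
have -> : \sum_(i < N) (c i *+ count_mem (i : nat) (j :: s)) *: x i =
   \sum_(i < N) ((c i *+ (j == i :> nat)) *: x i + (c i *+ count_mem (i : nat) s) *: x i).
  by apply: eq_bigr => i _ /=; rewrite mulrnDr scalerDl.
rewrite big_split /=; congr (_ + _).
rewrite (bigD1 (Ordinal jN)) //= eqxx mulr1n big1 ?addr0 // => i /negPf.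
by rewrite -val_eqE /= eq_sym => ->; rewrite mulr0n scale0r.
Qed.

Lemma seq_ltn_bound (s : seq nat) : exists N, forall i, i \in s -> (i < N)%N.
Proof.
exists (\max_(i <- s) i).+1 => i iS; rewrite ltnS.
exact: (@leq_bigmax_seq _ s xpredT id i).
Qed.

Lemma lin_spanE v : lin_span x v <-> exists N a, v = xsum N a.
Proof.
split=> [[s [c ->]]|[N [a ->]]].
  have [N sN] := seq_ltn_bound s.
  by exists N, (fun i => c i *+ count_mem i s); exact: seq_sum_xsum.
exists (iota 0 N), a.
by rewrite /xsum -(big_mkord xpredT (fun i => a i *: x i)) /index_iota subn0.
Qed.

Lemma lin_span_xsum_ge N0 v : lin_span x v -> exists N a, (N0 <= N)%N /\ v = xsum N a.
Proof.
move=> /lin_spanE [N [a ->]]; exists (maxn N N0), (truncate N a).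
by rewrite leq_maxr; split => //; exact: xsum_widen (leq_maxl _ _).
Qed.

Lemma tail_spanE m v : tail_span x m v <->
  exists N a, (forall i, (i <= m)%N -> a i = 0) /\ v = xsum N a.
Proof.
split=> [[s [c [sm ->]]]|[N [a [am ->]]]].
  have [N sN] := seq_ltn_bound s.
  exists N, (fun i => c i *+ count_mem i s); split; last exact: seq_sum_xsum.
  move=> i im; rewrite (count_memPn _) ?mulr0n //; apply/negP => /sm.
  by rewrite ltnNge im.
exists [seq i <- iota 0 N | (m < i)%N], a; split.
  by move=> i; rewrite mem_filter => /andP [].
rewrite big_filter big_mkcond /xsum -(big_mkord xpredT (fun i => a i *: x i)).
rewrite /index_iota subn0; apply: eq_bigr => i _; case: ltnP => // im.
by rewrite am // scale0r.
Qed.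

Lemma lin_span0 : lin_span x 0.
Proof. by exists [::], (fun _ => 0); rewrite big_nil. Qed.

Lemma lin_spanD u v : lin_span x u -> lin_span x v -> lin_span x (u + v).
Proof.
move=> /lin_spanE [N [a ->]] /lin_spanE [N' [b ->]].
apply/lin_spanE; exists (maxn N N'), (fun i => truncate N a i + truncate N' b i).
by rewrite -xsumD -!xsum_widen ?leq_maxl ?leq_maxr.
Qed.

Lemma lin_spanZ t v : lin_span x v -> lin_span x (t *: v).
Proof.
by move=> /lin_spanE [N [a ->]]; apply/lin_spanE; exists N, (fun i => t * a i); rewrite xsumZ.
Qed.

Lemma lin_span_x k : lin_span x (x k).
Proof. by exists [:: k], (fun _ => 1); rewrite big_seq1 scale1r. Qed.

Lemma lin_span_approx v e : closure (lin_span x) = setT -> 0 < e ->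
  exists w, lin_span x w /\ `|v - w| < e.
Proof.
move=> dense e0; have : closure (lin_span x) v by rewrite dense.
move=> /(_ _ (nbhsx_ballx v e e0)) [w [Sw vw]]; exists w; split => //.
by move: vw; rewrite -ball_normE.
Qed.

Definition tail_estimate (K : F) (f : V) (m : nat) :=
  forall g, tail_span x m g -> `|f| <= K * `|f + g|.

End Coordinates.

Section TailEstimate.
Variables (F : numFieldType) (V : normedModType F) (x : nat -> V) (xs : nat -> V -> F).
Hypothesis xs_lin : forall n a u v, xs n (a *: u + v) = a * xs n u + xs n v.
Hypothesis xs_bio : forall n k, xs n (x k) = (n == k)%:R.

Section SmallPerturbations.
Variables (C : F) (C0 : 0 <= C) (xs_bd : forall n v, `|xs n v| <= C * `|v|).
Variables (K : F) (f : V).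
Hypothesis K1 : 1 <= K.

Lemma bad_perturbation_coord_le g i :
  K * `|f + g| < `|f| -> `|xs i g| <= C * (`|f| + `|f|).
Proof.
move=> fg; apply: le_trans (xs_bd i g) _; apply: ler_wpM2l => //.
rewrite -{1}(addKr f g) addrC; apply: le_trans (ler_normB _ _) _; rewrite lerD2r.
exact: le_trans (ler_peMl (normr_ge0 _) K1) (ltW fg).
Qed.

Section BadPerturbations.
Hypothesis bad : forall m, exists g, tail_span x m g /\ K * `|f + g| < `|f|.

(* Successive bad perturbations are taken with disjoint coordinate supports, so their
   sum keeps coordinates bounded while the defect [k ||f||] grows linearly. *)
Lemma bad_perturbations_sum n0 k : exists M a, [/\ forall i, (i <= n0)%N -> a i = 0,
    forall i, `|xs i (xsum x M a)| <= C * (`|f| + `|f|) &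
    K * `|k.+1%:R *: f + xsum x M a| < k.+1%:R * `|f|].
Proof.
have K0 : 0 <= K := le_trans ler01 K1.
elim: k => [|k [M [a [a0 aC aK]]]].
  have [g [/tail_spanE [N [b [b0 ->]]] bg]] := bad n0.
  exists N, b; split => //; last by rewrite scale1r mul1r.
  by move=> i; exact: bad_perturbation_coord_le.
have [g [tg bg]] := bad (maxn n0 M); have [N [b [b0 gE]]] := (tail_spanE _ _ _).1 tg.
have sumE : xsum x (M + N) (fun i => truncate M a i + truncate N b i) = xsum x M a + g.
  by rewrite -xsumD -!xsum_widen ?leq_addl ?leq_addr // gE.
exists (M + N)%N, (fun i => truncate M a i + truncate N b i); rewrite sumE; split.
- move=> i iN; rewrite /truncate a0 // b0 ?if_same ?addr0 //.
  exact: leq_trans iN (leq_maxl _ _).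
- move=> i; rewrite (coordD xs_lin); case: (ltnP i M) => iM.
    have -> : xs i g = 0.
      by rewrite gE (coord_xsum xs_lin xs_bio) b0 ?if_same // (leq_trans (ltnW iM)) ?leq_maxr.
    by rewrite addr0; exact: aC.
  by rewrite (coord_xsum xs_lin xs_bio) ltnNge iM add0r; exact: bad_perturbation_coord_le.
- have -> : k.+2%:R *: f + (xsum x M a + g) = (k.+1%:R *: f + xsum x M a) + (f + g).
    by rewrite mulrSr scalerDl scale1r addrACA.
  apply: le_lt_trans (ler_wpM2l K0 (ler_normD _ _)) _.
  by rewrite mulrDr [k.+2%:R]mulrSr mulrDl mul1r ltrD.
Qed.

End BadPerturbations.

Hypothesis archi : forall y : F, 0 <= y -> exists k : nat, y < k%:R.

(* If [f] had no tail estimate, averaging [k] bad perturbations would give one with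
   coordinates below [d] that is still bad. *)
Lemma tail_estimate_of_small n0 d : 0 < d ->
  (forall g, tail_span x n0 g -> sup_coord_lt xs g d -> `|f| <= K * `|f + g|) ->
  exists m, tail_estimate x K f m.
Proof.
move=> d0 small; have [//|no_m] := pselect (exists m, tail_estimate x K f m).
exfalso; have bad m : exists g, tail_span x m g /\ K * `|f + g| < `|f|.
  apply: contrapT => no_g; apply: no_m; exists m => g tg.
  rewrite real_leNgt ?ger0_real ?mulr_ge0 ?normr_ge0 ?(le_trans ler01 K1) //.
  by apply/negP => fg; apply: no_g; exists g.
set B := C * (`|f| + `|f|).
have B0 : 0 <= B by rewrite mulr_ge0 ?addr_ge0.
have [k Bk] := archi (divr_ge0 B0 (ltW d0)).
have [M [a [a0 aB aK]]] := bad_perturbations_sum bad n0 k.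
have k0 : 0 < k.+1%:R :> F by rewrite ltr0n.
set t := (k.+1%:R : F)^-1; have t0 : 0 < t by rewrite invr_gt0.
have h_tail : tail_span x n0 (t *: xsum x M a).
  apply/tail_spanE; exists M, (fun i => t * a i); rewrite xsumZ.
  by split => // i /a0 ->; rewrite mulr0.
have h_small : sup_coord_lt xs (t *: xsum x M a) d.
  exists (B * t); last first.
    by move=> i; rewrite (coordZ xs_lin) normrM gtr0_norm // mulrC ler_pM2r.
  rewrite ltr_pdivrMr // mulrC; apply: lt_le_trans (_ : k%:R * d <= _).
    by rewrite -ltr_pdivrMr.
  by rewrite ler_wpM2r ?(ltW d0) // ler_nat.
have := small _ h_tail h_small.
have -> : f + t *: xsum x M a = t *: (k.+1%:R *: f + xsum x M a).
  by rewrite scalerDr scalerA mulVf ?gt_eqF // scale1r.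
rewrite normrZ gtr0_norm // mulrCA -(ler_pM2l k0) /t mulVKf ?gt_eqF //.
by move/le_lt_trans/(_ aK); rewrite ltxx.
Qed.

End SmallPerturbations.
End TailEstimate.

Section NormingFunctionals.
Variables (F : numFieldType) (V : normedModType F) (x : nat -> V) (xs : nat -> V -> F).
Hypothesis xs_lin : forall n a u v, xs n (a *: u + v) = a * xs n u + xs n v.
Hypothesis xs_bio : forall n k, xs n (x k) = (n == k)%:R.

Definition coords L v : 'rV[F]_L := \row_(i < L) xs i v.

Lemma coordsD L u v : coords L (u + v) = coords L u + coords L v.
Proof. by apply/rowP => i; rewrite !mxE (coordD xs_lin). Qed.

Lemma coordsZ L t v : coords L (t *: v) = t *: coords L v.
Proof. by apply/rowP => i; rewrite !mxE (coordZ xs_lin). Qed.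

Lemma coords0 L : coords L 0 = 0.
Proof. by apply/rowP => i; rewrite !mxE (coord0 xs_lin). Qed.

Lemma coords_onto L (b : 'rV[F]_L.+1) : exists2 v, lin_span x v & coords L.+1 v = b.
Proof.
exists (xsum x L.+1 (fun i => b 0 (inord i))); first by apply/lin_spanE; do 2!eexists.
by apply/rowP => i; rewrite !mxE (coord_xsum xs_lin xs_bio) ltn_ord inord_val.
Qed.

Lemma coords_eqP L u v : coords L u = coords L v <-> forall i, (i < L)%N -> xs i u = xs i v.
Proof.
split=> [uv i iL|uv]; last by apply/rowP => i; rewrite !mxE uv.
by have := congr1 (fun M : 'rV[F]_L => M 0 (Ordinal iL)) uv; rewrite !mxE.
Qed.

(* If [u] is supported in the first [N] coordinates, [v - u] is a tail vector beyond [m]. *)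
Lemma tail_estimate_coords K u m : lin_span x u -> tail_estimate x K u m ->
  exists L, forall v, lin_span x v -> coords L.+1 v = coords L.+1 u -> `|u| <= K * `|v|.
Proof.
move=> /lin_spanE [N [a uE]] um; exists (m + N)%N => v.
move=> /(lin_span_xsum_ge (m + N).+1) [N' [b [NN' vE]]] /coords_eqP vu.
have {}uE : u = xsum x N' (truncate N a) by rewrite uE; apply: xsum_widen; lia.
have -> : v = u + (v - u) by rewrite addrC subrK.
apply: um; apply/tail_spanE; exists N', (fun i => b i - truncate N a i); split.
  move=> i im; have iN' : (i < N')%N by lia.
  have iL : (i < (m + N).+1)%N by lia.
  have := vu i iL; rewrite vE uE !(coord_xsum xs_lin xs_bio) iN' /= => ->.
  by rewrite subrr.
by rewrite vE uE xsumN xsumD.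
Qed.

Definition coord_comb L (g : nat -> F) v := \sum_(i < L) g i * xs i v.

Lemma coord_comb_dual_span L g : dual_span xs (coord_comb L g).
Proof.
exists (iota 0 L), g; apply: funext => v.
by rewrite /coord_comb -(big_mkord xpredT (fun i => g i * xs i v)) /index_iota subn0.
Qed.

Lemma coord_combD L g u v : coord_comb L g (u + v) = coord_comb L g u + coord_comb L g v.
Proof.
by rewrite /coord_comb -big_split; apply: eq_bigr => i _; rewrite (coordD xs_lin) mulrDr.
Qed.

Lemma coord_combZ L g t v : coord_comb L g (t *: v) = t * coord_comb L g v.
Proof.
by rewrite /coord_comb mulr_sumr; apply: eq_bigr => i _; rewrite (coordZ xs_lin) mulrCA.
Qed.

Lemma coord_comb_coords L g u v :
  coords L u = coords L v -> coord_comb L g u = coord_comb L g v.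
Proof. by move=> /coords_eqP uv; apply: eq_bigr => i _; rewrite uv. Qed.

Lemma colform_coords L (c : 'cV[F]_L.+1) v :
  colform c (coords L.+1 v) = coord_comb L.+1 (fun i => c (inord i) 0) v.
Proof.
by rewrite /colform /coord_comb mxE; apply: eq_bigr => i _; rewrite mxE mulrC inord_val.
Qed.

Lemma dual_span_sub psi : dual_span xs psi -> forall u v, psi (u - v) = psi u - psi v.
Proof.
case=> s [c ->] u v; rewrite -sumrB; apply: eq_bigr => i _.
by rewrite (coordB xs_lin) mulrBr.
Qed.

Definition norming_functional K u psi :=
  [/\ dual_span xs psi, dual_norm_eq1 psi & `|u| <= K * `|psi u|].

Section BoundedCoordinates.
Variables (C : F) (C0 : 0 <= C) (xs_bd : forall n v, `|xs n v| <= C * `|v|).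
Hypothesis dense : closure (lin_span x) = setT.

Lemma coord_comb_le L g v : `|coord_comb L g v| <= (\sum_(i < L) `|g i| * C) * `|v|.
Proof.
rewrite mulr_suml; apply: le_trans (ler_norm_sum _ _ _) _.
by apply: ler_sum => i _; rewrite normrM -mulrA ler_wpM2l.
Qed.

(* [coord_comb L g] is continuous, so a norm bound on the dense span extends to [V]. *)
Lemma coord_comb_le_norm L g :
  (forall v, lin_span x v -> `|coord_comb L g v| <= `|v|) ->
  forall v, `|coord_comb L g v| <= `|v|.
Proof.
move=> gS v; set D := \sum_(i < L) `|g i| * C.
have D1 : 0 < 1 + D by rewrite ltr_wpDr // sumr_ge0 // => i _; rewrite mulr_ge0.
apply/ler_addgt0Pr => e e0.
have [w [Sw vw]] := lin_span_approx v dense (divr_gt0 e0 D1).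
rewrite -{1}(subrK w v) coord_combD addrC.
apply: le_trans (ler_normD _ _) _.
apply: le_trans (lerD (gS _ Sw) (coord_comb_le L g (v - w))) _.
apply: le_trans (lerD (_ : `|w| <= `|v| + `|v - w|) (lexx _)) _.
  by rewrite -{1}(subKr v w); exact: ler_normB.
rewrite -addrA lerD2l -{1}(mul1r `|v - w|) -mulrDl -ler_pdivlMl // mulrC.
exact: ltW.
Qed.

Lemma coord_comb_norming_functional K u L g : u != 0 ->
  (forall v, lin_span x v -> `|coord_comb L g v| <= `|v|) -> `|u| <= K * `|coord_comb L g u| ->
  (forall e, 0 < e ->
     exists v, coord_comb L g v = coord_comb L g u /\ `|v| < `|coord_comb L g u| + e) ->
  exists psi, norming_functional K u psi.
Proof.
move=> u0 gS ug near; exists (coord_comb L g); split => //.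
  exact: coord_comb_dual_span.
apply: dual_norm_eq1_of_near_attained near => //; first exact: coord_combZ.
  exact: coord_comb_le_norm.
by apply: contraTneq ug => ->; rewrite normr0 mulr0 normr_le0.
Qed.

End BoundedCoordinates.

Lemma norming_of_functionals K : 1 <= K -> closure (lin_span x) = setT ->
  (forall u, lin_span x u -> u != 0 -> exists psi, norming_functional K u psi) ->
  norming K^-1 (dual_span xs).
Proof.
move=> K1 dense psiP f e e0.
have [w [Sw fw]] := lin_span_approx f dense (divr_gt0 e0 (ltr0n _ 2)).
have [psi [Dpsi psi1 psiw]] : exists psi,
    [/\ dual_span xs psi, dual_norm_eq1 psi & K^-1 * `|w| <= `|psi w|].
  have [->|w0] := eqVneq w 0.
    have [psi [Dpsi psi1 _]] := psiP _ (lin_span_x x 0) (x_neq0 xs_lin xs_bio 0).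
    by exists psi; rewrite normr0 mulr0.
  have [psi [Dpsi psi1 uK]] := psiP w Sw w0; exists psi; split => //.
  by rewrite ler_pdivrMl // (lt_le_trans ltr01 K1).
exists psi; split => //; split => //.
exact: norming_approx (dual_span_sub Dpsi) psi1.1 K1 psiw fw.
Qed.

Lemma cor33_of_norming_functionals C K :
  (forall y : F, 0 <= y -> exists k : nat, y < k%:R) -> 1 <= K ->
  closure (lin_span x) = setT -> (forall n, dual_norm_le (xs n) C) ->
  (forall f, lin_span x f -> exists (n : nat) (d : F), 0 < d /\
     forall g, tail_span x n g -> sup_coord_lt xs g d -> `|f| <= K * `|f + g|) ->
  (forall u, lin_span x u -> u != 0 -> (exists m, tail_estimate x K u m) ->
     exists psi, norming_functional K u psi) ->
  (forall f, lin_span x f -> exists m, tail_estimate x K f m) /\ norming K^-1 (dual_span xs).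
Proof.
move=> archi K1 dense xs_bd small psiP.
have C0 := dual_bound_ge0 xs_lin xs_bio (xs_bd 0%N).
have tailP f : lin_span x f -> exists m, tail_estimate x K f m.
  move=> Sf; have [n0 [d [d0 smallf]]] := small f Sf.
  exact: (tail_estimate_of_small xs_lin xs_bio C0 xs_bd K1 archi d0 smallf).
split; first exact: tailP.
apply: (norming_of_functionals K1 dense) => u Su u0.
exact: psiP (tailP u Su).
Qed.

End NormingFunctionals.

Section RealScalars.
Variables (R : realType) (V : normedModType R) (x : nat -> V) (xs : nat -> V -> R).
Hypothesis xs_lin : forall n a u v, xs n (a *: u + v) = a * xs n u + xs n v.
Hypothesis xs_bio : forall n k, xs n (x k) = (n == k)%:R.
Variables (C : R) (C0 : 0 <= C) (xs_bd : forall n v, `|xs n v| <= C * `|v|).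
Hypothesis dense : closure (lin_span x) = setT.

Lemma real_norming_functional K u : 1 <= K -> lin_span x u -> u != 0 ->
  (exists m, tail_estimate x K u m) -> exists psi, norming_functional xs K u psi.
Proof.
move=> K1 Su u0 [m um]; have K0 : 0 < K := lt_le_trans ltr01 K1.
have [L uL] := tail_estimate_coords xs_lin xs_bio Su um.
have normZ t (v : V) : 0 < t -> `|t *: v| = t * `|v| by move=> t0; rewrite normrZ gtr0_norm.
have uLK v : lin_span x v -> coords xs L.+1 v = coords xs L.+1 u -> `|u| / K <= `|v|.
  by move=> Sv vu; rewrite ler_pdivrMr // mulrC; exact: uL.
have [c [cS cu near]] := quot_norm_support (lin_span0 x) (@lin_spanD _ _ x)
  (fun t v _ Sv => lin_spanZ t Sv) (@normr_ge0 _ _) (normr0 _) (@ler_normD _ _) normZ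
  (coordsD xs_lin L.+1) (coords0 xs_lin L.+1) (coordsZ xs_lin L.+1)
  (coords_onto xs_lin xs_bio (L := L)) Su uLK.
pose g i := c (inord i) 0.
have cT v : colform c (coords xs L.+1 v) = coord_comb xs L.+1 g v by exact: colform_coords.
apply: (coord_comb_norming_functional xs_lin C0 xs_bd dense u0 (L := L.+1) (g := g)).
- move=> v Sv; have := cS _ (lin_spanZ (-1) Sv).
  rewrite (coordsZ xs_lin) colformZ normrZ normrN1 mul1r mulN1r => cSN.
  by rewrite ler_norml -cT cS // andbT lerNl.
- by rewrite -ler_pdivrMl // mulrC; apply: le_trans cu _; rewrite cT ler_norm.
- move=> e e0; have [v [Sv vu ve]] := near e e0.
  exists v; split; first exact: coord_comb_coords.
  by apply: lt_le_trans ve _; rewrite lerD2r cT ler_norm.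
Qed.

End RealScalars.

Lemma Cor33R (R : realType) : Cor33 R.
Proof.
move=> V x xs K [dense [xs_dual xs_bio]] K1 [C xs_bd] small.
have xs_lin n := (xs_dual n).1.
have C0 := dual_bound_ge0 xs_lin xs_bio (xs_bd 0%N).
apply: (cor33_of_norming_functionals xs_lin xs_bio _ K1 dense xs_bd small).
  by move=> y y0; exists (Num.bound y); exact: archi_boundP.
move=> u Su u0; exact: (real_norming_functional xs_lin xs_bio C0 xs_bd dense K1 Su u0).
Qed.

(* The bare names would denote [Num.Re] and [Num.Im]. *)
Local Notation Re := complex.Re.
Local Notation Im := complex.Im.

Section ComplexParts.
Variable R : realType.
Local Open Scope complex_scope.
Implicit Types a b z : R[i].

Lemma ReD a b : Re (a + b) = Re a + Re b.
Proof. by case: a => ? ?; case: b => ? ?; simpc. Qed.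

Lemma ImD a b : Im (a + b) = Im a + Im b.
Proof. by case: a => ? ?; case: b => ? ?; simpc. Qed.

Lemma ReMC (t : R) z : Re (t%:C * z) = t * Re z.
Proof. by case: z => ? ?; simpc. Qed.

Lemma ImMC (t : R) z : Im (t%:C * z) = t * Im z.
Proof. by case: z => ? ?; simpc. Qed.

Lemma Re_conjM (p q : R) z : Re ((p -i* q) * z) = p * Re z + q * Im z.
Proof. by case: z => ? ?; simpc. Qed.

Lemma Re_sum L (f : 'I_L -> R[i]) : Re (\sum_(i < L) f i) = \sum_(i < L) Re (f i).
Proof. by rewrite (big_morph _ ReD (erefl : Re 0 = 0)). Qed.

Lemma le_Re a b : a <= b -> Re a <= Re b.
Proof. by rewrite lecE => /andP []. Qed.

Lemma ge0_Re a : 0 <= a -> 0 <= Re a.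
Proof. exact: le_Re. Qed.

Lemma ge0_lecE a b : 0 <= a -> 0 <= b -> (a <= b) = (Re a <= Re b).
Proof. by move=> a0 b0; rewrite lecE (ger0_Im a0) (ger0_Im b0) eqxx. Qed.

Lemma ge0_ltcE a b : 0 <= a -> 0 <= b -> (a < b) = (Re a < Re b).
Proof. by move=> a0 b0; rewrite ltcE (ger0_Im a0) (ger0_Im b0) eqxx. Qed.

Lemma Re_le_Re_norm a : Re a <= Re `|a|.
Proof.
have := normc_ge_Re a; rewrite -(RRe_real (ger0_real (normr_ge0 a))) lecR.
exact/le_trans/ler_norm.
Qed.

End ComplexParts.

Section ComplexNormBound.
Variables (R : realType) (V : normedModType R[i]).

(* Rotating [v] by the phase of [phi v] turns a bound on real parts into a bound on moduli. *)
Lemma norm_le_of_Re_le (S : set V) (phi : V -> R[i]) :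
  (forall t v, S v -> S (t *: v)) -> (forall t v, phi (t *: v) = t * phi v) ->
  (forall v, S v -> Re (phi v) <= Re `|v|) -> forall v, S v -> `|phi v| <= `|v|.
Proof.
move=> SZ phiZ phiS v Sv; have [->|z0] := eqVneq (phi v) 0; first by rewrite normr0.
set w := `|phi v| / phi v; have w1 : `|w| = 1 by rewrite normf_div normr_id divff ?normr_eq0.
have := phiS _ (SZ w _ Sv); rewrite phiZ mulfVK // normrZ w1 mul1r.
by rewrite ge0_lecE ?normr_ge0.
Qed.

End ComplexNormBound.

Section ComplexScalars.
Variables (R : realType) (V : normedModType R[i]) (x : nat -> V) (xs : nat -> V -> R[i]).
Hypothesis xs_lin : forall n a u v, xs n (a *: u + v) = a * xs n u + xs n v.
Hypothesis xs_bio : forall n k, xs n (x k) = (n == k)%:R.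
Variables (C : R[i]) (C0 : 0 <= C) (xs_bd : forall n v, `|xs n v| <= C * `|v|).
Hypothesis dense : closure (lin_span x) = setT.
Local Open Scope complex_scope.

Definition re_im_coords L (v : V) : 'rV[R]_(L + L) :=
  row_mx (\row_(i < L) Re (xs i v)) (\row_(i < L) Im (xs i v)).

Lemma re_im_coordsD L u v :
  re_im_coords L (u + v) = re_im_coords L u + re_im_coords L v.
Proof.
by rewrite /re_im_coords add_row_mx; congr row_mx; apply/rowP => i;
  rewrite !mxE (coordD xs_lin) ?ReD ?ImD.
Qed.

Lemma re_im_coords0 L : re_im_coords L 0 = 0.
Proof.
by rewrite /re_im_coords -row_mx0; congr row_mx; apply/rowP => i; rewrite !mxE (coord0 xs_lin).
Qed.

Lemma re_im_coordsZ L (t : R) v : re_im_coords L (t%:C *: v) = t *: re_im_coords L v.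
Proof.
by rewrite /re_im_coords scale_row_mx; congr row_mx; apply/rowP => i;
  rewrite !mxE (coordZ xs_lin) ?ReMC ?ImMC.
Qed.

Lemma re_im_coords_onto L (b : 'rV[R]_(L.+1 + L.+1)) :
  exists2 v, lin_span x v & re_im_coords L.+1 v = b.
Proof.
exists (xsum x L.+1 (fun i => lsubmx b 0 (inord i) +i* rsubmx b 0 (inord i))).
  by apply/lin_spanE; do 2!eexists.
rewrite -[RHS]hsubmxK; congr row_mx; apply/rowP => i;
  by rewrite !mxE (coord_xsum xs_lin xs_bio) ltn_ord /= inord_val !mxE.
Qed.

Lemma re_im_coords_inj L u v :
  re_im_coords L u = re_im_coords L v -> coords xs L u = coords xs L v.
Proof.
move=> /eq_row_mx [reE imE]; apply/rowP => i; apply/eqP; rewrite !mxE eq_complex.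
have := congr1 (fun M : 'rV[R]_L => M 0 i) reE; have := congr1 (fun M : 'rV[R]_L => M 0 i) imE.
by rewrite !mxE => -> ->; rewrite !eqxx.
Qed.

Lemma complex_norming_functional K u : 1 <= K -> lin_span x u -> u != 0 ->
  (exists m, tail_estimate x K u m) -> exists psi, norming_functional xs K u psi.
Proof.
move=> K1 Su u0 [m um]; have K0 : 0 < K := lt_le_trans ltr01 K1.
have [L uL] := tail_estimate_coords xs_lin xs_bio Su um.
have nrmD (v w : V) : Re `|v + w| <= Re `|v| + Re `|w| by rewrite -ReD le_Re ?ler_normD.
have nrmZ (t : R) (v : V) : 0 < t -> Re `|t%:C *: v| = t * Re `|v|.
  by move=> t0; rewrite normrZ gtr0_norm ?ReMC ?ltcR.
have nrm0 : Re `|0 : V| = 0 by rewrite normr0.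
have uLRe v : lin_span x v -> re_im_coords L.+1 v = re_im_coords L.+1 u ->
    Re (`|u| / K) <= Re `|v|.
  move=> Sv /re_im_coords_inj vu; apply: le_Re.
  by rewrite ler_pdivrMr // mulrC; exact: uL.
have [c [cS cu near]] := quot_norm_support (lin_span0 x) (@lin_spanD _ _ x)
  (fun t v _ Sv => lin_spanZ t%:C Sv) (fun v => ge0_Re (normr_ge0 v))
  nrm0 nrmD nrmZ (re_im_coordsD L.+1) (re_im_coords0 L.+1) (re_im_coordsZ L.+1) (@re_im_coords_onto L) Su uLRe.
pose g i := usubmx c (inord i) 0 -i* dsubmx c (inord i) 0.
have cT v : colform c (re_im_coords L.+1 v) = Re (coord_comb xs L.+1 g v).
  rewrite /colform /re_im_coords -[c]vsubmxK mul_row_col mxE !mxE.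
  rewrite /coord_comb Re_sum -big_split /=.
  by apply: eq_bigr => i _; rewrite /g Re_conjM inord_val !mxE mulrC [Im _ * _]mulrC.
apply: (@coord_comb_norming_functional _ _ x xs xs_lin C C0 xs_bd dense K u L.+1 g u0).
- apply: (norm_le_of_Re_le (@lin_spanZ _ _ x)) => [t v|v Sv]; first exact: coord_combZ.
  by rewrite -cT cS.
- rewrite -ler_pdivrMl // mulrC ge0_lecE ?divr_ge0 ?normr_ge0 ?(ltW K0) //.
  by apply: le_trans cu _; rewrite cT Re_le_Re_norm.
- move=> e e0; have Ree0 : 0 < Re e by move: e0; rewrite ltcE => /andP [].
  have [v [Sv vu ve]] := near _ Ree0.
  exists v; split; first by apply: coord_comb_coords; exact: re_im_coords_inj.
  rewrite ge0_ltcE ?addr_ge0 ?normr_ge0 ?(ltW e0) // ReD.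
  by apply: lt_le_trans ve _; rewrite lerD2r cT Re_le_Re_norm.
Qed.

End ComplexScalars.

Lemma Cor33C (R : realType) : Cor33 R[i].
Proof.
move=> V x xs K [dense [xs_dual xs_bio]] K1 [C xs_bd] small.
have xs_lin n := (xs_dual n).1.
have C0 := dual_bound_ge0 xs_lin xs_bio (xs_bd 0%N).
apply: (cor33_of_norming_functionals xs_lin xs_bio _ K1 dense xs_bd small).
  move=> y y0; exists (Num.bound (Re y)).
  rewrite -(RRe_real (ger0_real y0)) -(rmorph_nat (real_complex R)) ltcR.
  by rewrite archi_boundP ?ge0_Re.
move=> u Su u0; exact: (complex_norming_functional xs_lin xs_bio C0 xs_bd dense K1 Su u0).
Qed.

Theorem corollary3p3 (R : realType) : Cor33 R /\ Cor33 (complex R).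
Proof. by split; [exact: Cor33R | exact: Cor33C]. Qed.
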